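(* Let $\lambda_1,\lambda_2\in P^+$ and $c_1\ne c_2\in\mathbb C$. Then there is a surjective homomorphism of $\mathfrak{sl}_n\otimes\mathbb C[t]$-modules $F_{\lambda_1,\lambda_2}\twoheadrightarrow V(\lambda_1)_{c_1}\ast V(\lambda_2)_{c_2}$. Moreover $a^\tau_{\lambda_1,\lambda_2}\ge c^\tau_{\lambda_1,\lambda_2}$ for all $\tau\in P^+$.
   Context: $\mathfrak{sl}_n=\mathfrak n^+\oplus\mathfrak h\oplus\mathfrak n^-$, $R^+$ positive roots, $P^+$ dominant integral weights, $V(\mu)$ the simple module of highest weight $\mu$ with highest weight vector $v_\mu$; for $\alpha\in R^+$ fix an $\mathfrak{sl}_2$-triple $e_\alpha,f_\alpha,h_\alpha$ with $f_\alpha\in\mathfrak g_{-\alpha}$. $c^\tau_{\lambda_1,\lambda_2}$ is the multiplicity of $V(\tau)$ in $V(\lambda_1)\otimes V(\lambda_2)$. The current algebra $\mathfrak{sl}_n\otimes\mathbb C[t]$ has bracket $[x\otimes p,y\otimes q]=[x,y]\otimes pq$, graded by $t$-degree. For $\lambda=\lambda_1+\lambda_2$, $F_{\lambda_1,\lambda_2}$ is the $\mathfrak{sl}_n\otimes\mathbb C[t]$-module generated by $\mathbb 1$ subject to $(\mathfrak n^+\otimes\mathbb C[t]).\mathbb 1=0$, $(\mathfrak h\otimes t\mathbb C[t]).\mathbb 1=0$, $(\mathfrak n^-\otimes t^2\mathbb C[t]).\mathbb 1=0$, $(h\otimes1).\mathbb 1=\lambda(h)\mathbb 1$, and for $\alpha\in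 R^+$: $(f_\alpha\otimes1)^{\lambda(h_\alpha)+1}.\mathbb 1=0$, $(f_\alpha\otimes t)^{\min\{\lambda_1(h_\alpha),\lambda_2(h_\alpha)\}+1}.\mathbb 1=0$; $a^\tau_{\lambda_1,\lambda_2}=\dim\operatorname{Hom}_{\mathfrak{sl}_n}(F_{\lambda_1,\lambda_2},V(\tau))$. For $c\in\mathbb C$, $V(\mu)_c$ is $V(\mu)$ with $(x\otimes p).v=p(c)x.v$. The fusion product $V(\lambda_1)_{c_1}\ast V(\lambda_2)_{c_2}$ ($c_1\ne c_2$) is the associated graded module of $V(\lambda_1)_{c_1}\otimes V(\lambda_2)_{c_2}$ with respect to the filtration $U(\mathfrak{sl}_n\otimes\mathbb C[t])^{\le r}.(v_{\lambda_1}\otimes v_{\lambda_2})$, where $U^{\le r}$ is the span of elements of $t$-degree $\le r$. *)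

From HB Require Import structures.
From mathcomp Require Import all_boot all_order all_algebra.
From mathcomp Require Import mxtens.
From Stdlib Require Import ClassicalEpsilon.

Set Implicit Arguments.
Unset Strict Implicit.
Unset Printing Implicit Defensive.

Import GRing.Theory.
Local Open Scope ring_scope.

Section LieDefs.
Variables (K : fieldType) (n : nat).

Definition in_sl (x : 'M[K]_n) : Prop := \tr x = 0.
Definition lie (x y : 'M[K]_n) : 'M[K]_n := x *m y - y *m x.

Definition in_nplus (x : 'M[K]_n) : Prop := forall i j : 'I_n, (j <= i)%N -> x i j = 0.
Definition in_nminus (x : 'M[K]_n) : Prop := forall i j : 'I_n, (i <= j)%N -> x i j = 0.
Definition in_cartan (h : 'M[K]_n) : Prop := is_diag_mx h /\ \tr h = 0.

(* A dominant integral weight  lambda = sum_k m k * omega_k  (k < n-1) is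
   represented by its coordinates m k = lambda(h_{alpha_k}) in N.
   omega_k(h) = h_00 + ... + h_kk on diagonal h. *)
Definition domwt := 'I_n.-1 -> nat.
Definition wt (m : domwt) (h : 'M[K]_n) : K :=
  \sum_(k < n.-1) (m k)%:R * \sum_(l < n | (l <= k)%N) h l l.
Definition wt_add (m1 m2 : domwt) : domwt := fun k => (m1 k + m2 k)%N.
(* For the positive root alpha = eps_i - eps_j (i < j): lambda(h_alpha),
   h_alpha = E_ii - E_jj. *)
Definition wt_coroot (m : domwt) (i j : 'I_n) : nat :=
  (\sum_(k < n.-1 | (i <= k) && (k < j)) m k)%N.
Definition f_root (i j : 'I_n) : 'M[K]_n := delta_mx j i.

Definition is_sl_mod (V : lmodType K) (a : 'M[K]_n -> V -> V) : Prop :=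
  [/\ forall x y c v, in_sl x -> in_sl y -> a (c *: x + y) v = c *: a x v + a y v,
      forall x c u v, in_sl x -> a x (c *: u + v) = c *: a x u + a x v &
      forall x y v, in_sl x -> in_sl y ->
        a (lie x y) v = a x (a y v) - a y (a x v)].

(* A module over the current algebra sl_n (x) K[t]:  a x p v = (x (x) p).v *)
Definition is_cur_mod (V : lmodType K) (a : 'M[K]_n -> {poly K} -> V -> V) : Prop :=
  [/\ forall x y p c v, in_sl x -> in_sl y -> a (c *: x + y) p v = c *: a x p v + a y p v,
      forall x p q c v, in_sl x -> a x (c *: p + q) v = c *: a x p v + a x q v,
      forall x p c u v, in_sl x -> a x p (c *: u + v) = c *: a x p u + a x p v &
      forall x y p q v, in_sl x -> in_sl y ->
        a (lie x y) (p * q) v = a x p (a y q v) - a y q (a x p v)].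

Definition mx_act d (rho : 'M[K]_n -> 'M[K]_d) (x : 'M[K]_n) (v : 'rV[K]_d) : 'rV[K]_d :=
  v *m rho x.

Definition is_simple_hw (mu : domwt) d (rho : 'M[K]_n -> 'M[K]_d) (v : 'rV[K]_d) : Prop :=
  [/\ @is_sl_mod _ (mx_act rho),
      forall U : 'M[K]_d, (forall x, in_sl x -> (U *m rho x <= U)%MS) ->
        (U == (0 : 'M[K]_d))%MS \/ (1%:M <= U)%MS,
      v != 0,
      forall x, in_nplus x -> v *m rho x = 0 &
      forall h, in_cartan h -> v *m rho h = wt mu h *: v].

(* The evaluation module V(mu)_c tensor V(nu)_c' : the action of x (x) p on
   V1 (x) V2 (Kronecker product realisation, row vectors). *)
Definition tens_act d1 d2 (rho1 : 'M[K]_n -> 'M[K]_d1) (rho2 : 'M[K]_n -> 'M[K]_d2)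
  (c1 c2 : K) (x : 'M[K]_n) (p : {poly K}) : 'M[K]_(d1 * d2) :=
  p.[c1] *: (rho1 x *t (1%:M : 'M[K]_d2)) + p.[c2] *: ((1%:M : 'M[K]_d1) *t rho2 x).

Definition in_span D (P : 'rV[K]_D -> Prop) (v : 'rV[K]_D) : Prop :=
  exists s : seq 'rV[K]_D, (forall u, u \in s -> P u) /\
    (v <= \matrix_(i < size s) s`_i)%MS.
Definition span_of D (P : 'rV[K]_D -> Prop) : 'M[K]_D :=
  epsilon (inhabits 0) (fun M : 'M[K]_D => forall v, (v <= M)%MS <-> in_span P v).

(* mono A w k v : v = u.w for a monomial u = (x_1 (x) t^{j_1})...(x_m (x) t^{j_m})
   of U(sl_n (x) K[t]) of t-degree k = j_1 + ... + j_m. *)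
Inductive mono D (A : 'M[K]_n -> {poly K} -> 'M[K]_D) (w : 'rV[K]_D) :
    nat -> 'rV[K]_D -> Prop :=
  | mono0 : mono A w 0 w
  | monoS k j x v : in_sl x -> mono A w k v -> mono A w (k + j) (v *m A x 'X^j).

Definition filt D (A : 'M[K]_n -> {poly K} -> 'M[K]_D) (w : 'rV[K]_D) (r : nat) : 'M[K]_D :=
  span_of (fun v => exists2 k, (k <= r)%N & mono A w k v).
Definition filtm1 D (A : 'M[K]_n -> {poly K} -> 'M[K]_D) (w : 'rV[K]_D) (r : nat) : 'M[K]_D :=
  if r is r'.+1 then filt A w r' else 0.
(* the graded piece gr_r = W_r / W_{r-1}, realised as the complement
   W_r :\: W_{r-1} of W_{r-1} in W_r *)
Definition grpiece D (A : 'M[K]_n -> {poly K} -> 'M[K]_D) (w : 'rV[K]_D) (r : nat) : 'M[K]_D :=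
  (filt A w r :\: filtm1 A w r)%MS.
(* the quotient map W_r -> W_r / W_{r-1} ~= gr_r *)
Definition grproj D (A : 'M[K]_n -> {poly K} -> 'M[K]_D) (w : 'rV[K]_D) (r : nat) : 'M[K]_D :=
  proj_mx (grpiece A w r) (filtm1 A w r).

(* elements of the associated graded module gr = (+)_r gr_r:
   families g with g r in gr_r (only finitely many gr_r are nonzero) *)
Definition in_gr D (A : 'M[K]_n -> {poly K} -> 'M[K]_D) (w : 'rV[K]_D)
  (g : nat -> 'rV[K]_D) : Prop := forall r, (g r <= grpiece A w r)%MS.
(* action of x (x) p on gr: (x (x) t^k) [v]_r = [ (x (x) t^k) v ]_{r+k} *)
Definition gr_act D (A : 'M[K]_n -> {poly K} -> 'M[K]_D) (w : 'rV[K]_D)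
  (x : 'M[K]_n) (p : {poly K}) (g : nat -> 'rV[K]_D) : nat -> 'rV[K]_D :=
  fun s => \sum_(k < s.+1) p`_k *: (g (s - k)%N *m A x 'X^k *m grproj A w s).

Definition F_rel (l1 l2 : domwt) (V : lmodType K) (a : 'M[K]_n -> {poly K} -> V -> V)
  (v : V) : Prop :=
  [/\ forall x p, in_nplus x -> a x p v = 0,
      forall h p, in_cartan h -> p.[0] = 0 -> a h p v = 0,
      forall x (p : {poly K}), in_nminus x -> p`_0 = 0 -> p`_1 = 0 -> a x p v = 0,
      forall h, in_cartan h -> a h 1 v = wt (wt_add l1 l2) h *: v &
      (forall i j : 'I_n, (i < j)%N ->
        iter (wt_coroot (wt_add l1 l2) i j).+1 (a (f_root i j) 1) v = 0) /\
      (forall i j : 'I_n, (i < j)%N ->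
        iter (minn (wt_coroot l1 i j) (wt_coroot l2 i j)).+1 (a (f_root i j) 'X) v = 0)].

Inductive gen (V : lmodType K) (a : 'M[K]_n -> {poly K} -> V -> V) (v : V) : V -> Prop :=
  | gen_base : gen a v v
  | gen_add u u' : gen a v u -> gen a v u' -> gen a v (u + u')
  | gen_scale c u : gen a v u -> gen a v (c *: u)
  | gen_act x p u : in_sl x -> gen a v u -> gen a v (a x p u).

(* (V, a, one) is a presentation of F_{l1,l2}: the current-algebra module
   generated by one subject (only) to the relations F_rel, i.e. it is generated
   by one, one satisfies the relations, and it has the universal property. *)
Definition is_F (l1 l2 : domwt) (V : lmodType K) (a : 'M[K]_n -> {poly K} -> V -> V)
  (one : V) : Prop :=
  [/\ is_cur_mod a, F_rel l1 l2 a one, (forall u, gen a one u) &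
      forall (W : lmodType K) (b : 'M[K]_n -> {poly K} -> W -> W) (w : W),
        is_cur_mod b -> F_rel l1 l2 b w ->
        exists phi : V -> W,
          [/\ forall c u u', phi (c *: u + u') = c *: phi u + phi u',
              phi one = w &
              forall x p u, in_sl x -> phi (a x p u) = b x p (phi u)]].

End LieDefs.

From HB Require Import structures.
From mathcomp Require Import all_boot all_order all_algebra.
From mathcomp Require Import reals complex mxtens.
From mathcomp Require Import boolp functions.
From mathcomp Require Import ring.
From Stdlib Require Import ClassicalEpsilon.
Set Implicit Arguments.
Unset Strict Implicit.
Unset Printing Implicit Defensive.
Import GRing.Theory Num.Theory.
Local Open Scope ring_scope.

(* Filter V(l1)_c1 (x) V(l2)_c2 by W_r = U(sl_n (x) C[t])^{<= r}.w, with
   w = v_l1 (x) v_l2.  The associated graded module gr is generated by the class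
   [w] of w in degree 0, and [w] satisfies the defining relations of F_{l1,l2}:
   the sl_2 argument gives f_alpha^{l(h_alpha)+1}.[w] = 0, and because c1 != c2 the
   operator f_alpha (x) t acts on gr like (c1 - c2) f_alpha on the first tensor
   factor alone (or like (c2 - c1) f_alpha on the second), so it is nilpotent of
   order min(l1(h_alpha), l2(h_alpha)) + 1 on [w].  The universal property of F
   then gives a map F -> gr, onto because [w] generates gr.
   For the multiplicities, filter the intertwiners V(l1) (x) V(l2) -> V(tau) by
   their order of vanishing along W_r and split them into layers: the layer of
   order s kills W_(s-1), hence factors through gr_s.  As the filtration reaches
   the whole space (both factors are simple), k independent intertwiners out of
   the tensor product yield k independent intertwiners out of gr, hence out of F. *)

Section MatrixTensor.
Variable K : comNzRingType.

Lemma eq_mulmx_vec m n (M N : 'M[K]_(m, n)) :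
  (forall v : 'rV_m, v *m M = v *m N) -> M = N.
Proof. by move=> eqMN; apply/row_matrixP => i; rewrite !rowE eqMN. Qed.

Lemma tensmxDl m n p q (A B : 'M[K]_(m, n)) (C : 'M[K]_(p, q)) :
  (A + B) *t C = A *t C + B *t C.
Proof. by apply/matrixP=> i j; rewrite !mxE mulrDl. Qed.

Lemma tensmxDr m n p q (A : 'M[K]_(m, n)) (B C : 'M[K]_(p, q)) :
  A *t (B + C) = A *t B + A *t C.
Proof. by apply/matrixP=> i j; rewrite !mxE mulrDr. Qed.

Lemma tensmxZl m n p q c (A : 'M[K]_(m, n)) (C : 'M[K]_(p, q)) :
  (c *: A) *t C = c *: (A *t C).
Proof. by apply/matrixP=> i j; rewrite !mxE mulrA. Qed.

Lemma tensmxZr m n p q c (A : 'M[K]_(m, n)) (C : 'M[K]_(p, q)) :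
  A *t (c *: C) = c *: (A *t C).
Proof. by apply/matrixP=> i j; rewrite !mxE mulrCA. Qed.

Lemma tensmxNl m n p q (A : 'M[K]_(m, n)) (C : 'M[K]_(p, q)) :
  (- A) *t C = - (A *t C).
Proof. by apply/matrixP=> i j; rewrite !mxE mulNr. Qed.

Lemma tensmxNr m n p q (A : 'M[K]_(m, n)) (C : 'M[K]_(p, q)) :
  A *t (- C) = - (A *t C).
Proof. by apply/matrixP=> i j; rewrite !mxE mulrN. Qed.

Lemma tensmx_suml m p q I (r : seq I) (F : I -> 'M[K]_(m, p)) (v : 'rV[K]_q) :
  (\sum_(i <- r) F i) *t v = \sum_(i <- r) (F i *t v).
Proof.
by elim: r => [|i r IH]; rewrite ?big_nil ?tens0mx // !big_cons tensmxDl IH.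
Qed.

Lemma tensmx_sumr p q m I (r : seq I) (u : 'rV[K]_p) (F : I -> 'M[K]_(m, q)) :
  u *t (\sum_(i <- r) F i) = \sum_(i <- r) (u *t F i).
Proof.
by elim: r => [|i r IH]; rewrite ?big_nil ?tensmx0 // !big_cons tensmxDr IH.
Qed.

Lemma mul_tensmx1 p q (u : 'rV[K]_p) (v : 'rV[K]_q) (M : 'M[K]_p) :
  (u *t v) *m (M *t 1%:M) = (u *m M) *t v.
Proof. by rewrite tensmx_mul mulmx1. Qed.

Lemma mul_tens1mx p q (u : 'rV[K]_p) (v : 'rV[K]_q) (M : 'M[K]_q) :
  (u *t v) *m (1%:M *t M) = u *t (v *m M).
Proof. by rewrite tensmx_mul mulmx1. Qed.

Lemma delta_mx_tens p q (a : 'I_p) (b : 'I_q) :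
  delta_mx 0 (mxtens_index (a, b)) =
    (delta_mx 0 a : 'rV[K]_p) *t (delta_mx 0 b : 'rV[K]_q) :> 'rV[K]_(p * q).
Proof.
apply/matrixP => i j; case: (mxtens_indexP j) => a' b'.
rewrite !mxE !mxtens_indexK /= !ord1 /= (inj_eq (can_inj (@mxtens_indexK _ _))).
by rewrite xpair_eqE; case: (a' == a); case: (b' == b); rewrite ?mulr1 ?mulr0.
Qed.

Lemma tens1mx1 p q : (1%:M : 'M[K]_p) *t (1%:M : 'M[K]_q) = 1%:M.
Proof.
apply/matrixP => i j; case: (mxtens_indexP i) => a b; case: (mxtens_indexP j) => a' b'.
rewrite tensmxE !mxE (inj_eq (can_inj (@mxtens_indexK _ _))) xpair_eqE.
by case: (a == a'); case: (b == b'); rewrite ?mulr1 ?mulr0.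
Qed.

Lemma tensmx1_exp p q (M : 'M[K]_p) k :
  (M *t (1%:M : 'M[K]_q)) ^+ k = M ^+ k *t 1%:M.
Proof.
elim: k => [|k IH]; first by rewrite !expr0 tens1mx1.
by rewrite !exprS IH -!mulmxE tensmx_mul mulmx1.
Qed.

Lemma tens1mx_exp p q (M : 'M[K]_q) k :
  ((1%:M : 'M[K]_p) *t M) ^+ k = 1%:M *t M ^+ k.
Proof.
elim: k => [|k IH]; first by rewrite !expr0 tens1mx1.
by rewrite !exprS IH -!mulmxE tensmx_mul mulmx1.
Qed.

Definition tens_rmx p q (v : 'rV[K]_q) : 'M[K]_(p, p * q) :=
  \matrix_(a < p) ((delta_mx 0 a : 'rV[K]_p) *t v).

Definition tens_lmx p q (u : 'rV[K]_p) : 'M[K]_(q, p * q) :=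
  \matrix_(b < q) (u *t (delta_mx 0 b : 'rV[K]_q)).

Lemma mul_tens_rmx p q (u : 'rV[K]_p) (v : 'rV[K]_q) : u *m tens_rmx p v = u *t v.
Proof.
rewrite mulmx_sum_row {2}(row_sum_delta u) tensmx_suml; apply: eq_bigr => a _.
by rewrite rowK tensmxZl.
Qed.

Lemma mul_tens_lmx p q (u : 'rV[K]_p) (v : 'rV[K]_q) : v *m tens_lmx q u = u *t v.
Proof.
rewrite mulmx_sum_row {2}(row_sum_delta v) tensmx_sumr; apply: eq_bigr => b _.
by rewrite rowK tensmxZr.
Qed.

Lemma vec_mx_eq0 p q (z : 'rV[K]_(p * q)) : vec_mx z = 0 -> z = 0.
Proof. by move=> z0; rewrite -(vec_mxK z) z0; apply/eqP; rewrite mxvec_eq0. Qed.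

Lemma mxexpSr n (M : 'M[K]_n) k : M ^+ k.+1 = M ^+ k *m M.
Proof. by rewrite exprSr mulmxE. Qed.

End MatrixTensor.

Section SlBasics.
Variables (K : fieldType) (n : nat).

Lemma in_sl0 : in_sl (0 : 'M[K]_n).
Proof. by rewrite /in_sl mxtrace0. Qed.

Lemma in_sl_lie (x y : 'M[K]_n) : in_sl (lie x y).
Proof. by rewrite /in_sl /lie raddfB /= mxtrace_mulC subrr. Qed.

Lemma in_sl_nminus (x : 'M[K]_n) : in_nminus x -> in_sl x.
Proof. by move=> xN; rewrite /in_sl /mxtrace big1 // => i _; rewrite xN. Qed.

Lemma in_sl_delta (i j : 'I_n) : i != j -> in_sl (delta_mx i j : 'M[K]_n).
Proof.
move=> neq_ij; rewrite /in_sl /mxtrace big1 // => l _; rewrite mxE.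
by case: (l =P i) => [->|]; [rewrite (negbTE neq_ij) | ].
Qed.

Definition h_root (i j : 'I_n) : 'M[K]_n := delta_mx i i - delta_mx j j.

Lemma lie_e_f (i j : 'I_n) : lie (delta_mx i j) (f_root K i j) = h_root i j :> 'M[K]_n.
Proof. by rewrite /lie !mul_delta_mx. Qed.

Lemma lie_h_f (i j : 'I_n) : i != j -> lie (h_root i j) (f_root K i j) = - 2%:R *: f_root K i j.
Proof.
move=> neq_ij; rewrite /lie /h_root mulmxBl mulmxBr !mul_delta_mx.
rewrite mul_delta_mx_0 ?mul_delta_mx_0 // 1?eq_sym //.
by rewrite sub0r subr0 -opprD -mulr2n -scaler_nat scaleNr.
Qed.

Lemma e_root_nplus (i j : 'I_n) : (i < j)%N -> in_nplus (delta_mx i j : 'M[K]_n).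
Proof.
move=> lt_ij a b le_ba; rewrite mxE; case: eqP => [eq_ai|//]; case: eqP => [eq_bj|] //=.
by move: le_ba; rewrite eq_ai eq_bj leqNgt lt_ij.
Qed.

Lemma h_root_cartan (i j : 'I_n) : (i < j)%N -> in_cartan (h_root i j).
Proof.
move=> lt_ij; split; last by rewrite -lie_e_f; apply: in_sl_lie.
apply/is_diag_mxP => a b neq_ab; rewrite !mxE.
have offdiag c : (a == c) && (b == c) = false.
  by apply/andP => -[/eqP ac /eqP bc]; move: neq_ab; rewrite ac bc eqxx.
by rewrite !offdiag subrr.
Qed.

Lemma wt_h_root (m : domwt n) (i j : 'I_n) : (i < j)%N ->
  wt m (h_root i j) = (wt_coroot m i j)%:R.
Proof.
move=> lt_ij; rewrite /wt /wt_coroot [RHS]natr_sum [RHS]big_mkcond /=.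
apply: eq_bigr => k _.
have indicator (l0 : 'I_n) : \sum_(l < n | (l <= k)%N) ((l == l0)%:R : K) = (l0 <= k)%:R.
  rewrite big_mkcond (bigD1 l0) //= eqxx big1 ?addr0; first by case: ifP.
  by move=> l /negbTE ->; case: ifP.
under eq_bigr => l _ do rewrite !mxE !andbb.
rewrite sumrB !indicator.
case: (leqP i k) => ik; case: (leqP j k) => jk /=.
- by rewrite subrr mulr0.
- by rewrite subr0 mulr1.
- by move: (ltn_trans lt_ij (leq_ltn_trans jk ik)); rewrite ltnn.
- by rewrite subr0 mulr0.
Qed.

Lemma wt_add_apply (m1 m2 : domwt n) (h : 'M[K]_n) :
  wt (wt_add m1 m2) h = wt m1 h + wt m2 h.
Proof.
by rewrite /wt /wt_add -big_split /=; apply: eq_bigr => k _; rewrite natrD mulrDl.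
Qed.

Variables (d : nat) (rho : 'M[K]_n -> 'M[K]_d).

Lemma sl_mod_linear : is_sl_mod (mx_act rho) ->
  forall c x y, in_sl x -> in_sl y -> rho (c *: x + y) = c *: rho x + rho y.
Proof.
case=> rhoD _ _ c x y slx sly; apply: eq_mulmx_vec => v.
by have := rhoD x y c v slx sly; rewrite /mx_act => ->; rewrite mulmxDr scalemxAr.
Qed.

Lemma sl_mod_lie : is_sl_mod (mx_act rho) ->
  forall x y, in_sl x -> in_sl y -> rho (lie x y) = rho y *m rho x - rho x *m rho y.
Proof.
case=> _ _ rhoL x y slx sly; apply: eq_mulmx_vec => v.
by have := rhoL x y v slx sly; rewrite /mx_act => ->; rewrite mulmxBr !mulmxA.
Qed.

End SlBasics.

Section SL2.
Variables (K : numFieldType) (d : nat) (E F H : 'M[K]_d) (v : 'rV[K]_d) (m : nat).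
Hypotheses (defH : H = F *m E - E *m F) (FH : F *m H = H *m F - 2%:R *: F)
  (vE : v *m E = 0) (vH : v *m H = m%:R *: v).

Lemma hw_lower_H k : v *m F ^+ k *m H = (m%:R - 2%:R * k%:R) *: (v *m F ^+ k).
Proof.
elim: k => [|k IH]; first by rewrite expr0 mulmx1 vH mulr0 subr0.
rewrite mxexpSr mulmxA -(mulmxA _ F H) FH mulmxBr mulmxA IH.
rewrite -scalemxAl -scalemxAr -scalerBl; congr (_ *: _).
by rewrite -addn1 natrD; ring.
Qed.

Lemma hw_lower_E k : v *m F ^+ k.+1 *m E = (k.+1%:R * (m%:R - k%:R)) *: (v *m F ^+ k).
Proof.
have FE : F *m E = H + E *m F by rewrite defH subrK.
elim: k => [|k IH].
  by rewrite expr1 expr0 mulmx1 mul1r subr0 -mulmxA FE mulmxDr vH mulmxA vE mul0mx addr0.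
rewrite [F ^+ k.+2]mxexpSr mulmxA -(mulmxA _ F E) FE mulmxDr hw_lower_H mulmxA IH.
rewrite -scalemxAl -mulmxA -mxexpSr -scalerDl; congr (_ *: _).
by rewrite -[k.+2]addn1 -[k.+1]addn1 !natrD; ring.
Qed.

(* The vectors v F^k are eigenvectors of H with pairwise distinct eigenvalues
   m - 2k, so finitely many of them are nonzero; at the first k with
   v F^k = 0, hw_lower_E forces k = m + 1. *)
Lemma sl2_hw_vanish : v *m F ^+ m.+1 = 0.
Proof.
have vF_eventually0 : exists k, v *m F ^+ k == 0.
  apply: contrapT => allF; have nzF k : v *m F ^+ k != 0.
    by apply/negP => vF0; apply: allF; exists k.
  pose eigs := [seq m%:R - 2%:R * (k%:R : K) | k <- iota 0 d.+1].
  have : (size eigs < size (char_poly H))%N.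
    apply: max_poly_roots; first exact/monic_neq0/char_poly_monic.
      apply/allP => a /mapP [k _ ->]; rewrite -eigenvalue_root_char.
      by apply/eigenvalueP; exists (v *m F ^+ k); [exact: hw_lower_H | exact: nzF].
    rewrite map_inj_uniq ?iota_uniq // => a b /eqP.
    rewrite (inj_eq (addrI _)) eqr_opp (inj_eq (mulfI _)) ?pnatr_eq0 //.
    by rewrite eqr_nat => /eqP.
  by rewrite size_map size_iota size_char_poly ltnn.
case: (ex_minnP vF_eventually0) => -[|k] /eqP vFk min_k.
  by move: vFk; rewrite expr0 mulmx1 => ->; rewrite mul0mx.
have nz_k : v *m F ^+ k != 0 by apply/negP => /min_k; rewrite ltnn.
have := hw_lower_E k; rewrite vFk mul0mx => /esym/eqP.
rewrite scaler_eq0 (negbTE nz_k) orbF mulf_eq0 pnatr_eq0 /= subr_eq0 eqr_nat.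
by move=> /eqP ->.
Qed.

End SL2.

Section RootVanish.
Variables (K : numFieldType) (n d : nat) (rho : 'M[K]_n -> 'M[K]_d).
Hypotheses
  (rho_lin : forall c x y, in_sl x -> in_sl y -> rho (c *: x + y) = c *: rho x + rho y)
  (rho_lie : forall x y, in_sl x -> in_sl y -> rho (lie x y) = rho y *m rho x - rho x *m rho y).

Lemma rep0 : rho 0 = 0.
Proof.
have := rho_lin 1 (in_sl0 K n) (in_sl0 K n); rewrite scaler0 addr0 scale1r => r00.
by apply: (addrI (rho 0)); rewrite addr0 -r00.
Qed.

Lemma repZ c x : in_sl x -> rho (c *: x) = c *: rho x.
Proof. by move=> slx; have := rho_lin c slx (in_sl0 K n); rewrite !addr0 rep0 addr0. Qed.

Lemma hw_f_root_vanish (i j : 'I_n) (v : 'rV[K]_d) m : i != j ->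
  v *m rho (delta_mx i j) = 0 -> v *m rho (h_root K i j) = m%:R *: v ->
  v *m rho (f_root K i j) ^+ m.+1 = 0.
Proof.
move=> neq_ij vE vH.
have sl_e : in_sl (delta_mx i j : 'M[K]_n) by apply: in_sl_delta.
have sl_f : in_sl (f_root K i j) by apply: in_sl_delta; rewrite eq_sym.
have sl_h : in_sl (h_root K i j) by rewrite -(lie_e_f K); apply: in_sl_lie.
apply: (sl2_hw_vanish (E := rho (delta_mx i j)) (H := rho (h_root K i j))) => //.
  by rewrite -(lie_e_f K) rho_lie.
have := rho_lie sl_h sl_f; rewrite lie_h_f // repZ // => hf.
by rewrite -[rho (f_root K i j) *m _](subrK (rho (h_root K i j) *m rho (f_root K i j))) -hf
  addrC scaleNr.
Qed.

End RootVanish.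

Lemma simple_hw_f_root_vanish (K : numFieldType) n d (rho : 'M[K]_n -> 'M[K]_d)
    (v : 'rV[K]_d) (l : domwt n) (i j : 'I_n) :
  is_simple_hw l rho v -> (i < j)%N ->
  v *m rho (f_root K i j) ^+ (wt_coroot l i j).+1 = 0.
Proof.
case=> rhoM _ _ vN vH lt_ij.
apply: hw_f_root_vanish; first exact: sl_mod_linear.
- exact: sl_mod_lie.
- by rewrite neq_ltn lt_ij.
- exact/vN/e_root_nplus.
- by rewrite vH ?wt_h_root //; apply: h_root_cartan.
Qed.

Lemma simple_hw_preimage_full (K : fieldType) n d (rho : 'M[K]_n -> 'M[K]_d) l
    (v : 'rV[K]_d) D m (T : 'M[K]_(d, D)) (M : 'M[K]_n -> 'M[K]_D) (S : 'M[K]_(m, D)) :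
  is_simple_hw l rho v ->
  (forall x (u : 'rV[K]_d), in_sl x -> u *m rho x *m T = u *m T *m M x) ->
  (forall x, in_sl x -> (S *m M x <= S)%MS) ->
  (v *m T <= S)%MS -> (T <= S)%MS.
Proof.
case=> _ irr nz_v _ _ T_rho S_inv vTS.
pose U := kermx (T *m cokermx S).
have memU k (N : 'M[K]_(k, d)) : (N <= U)%MS = (N *m T <= S)%MS.
  by rewrite sub_kermx mulmxA submxE.
have U_inv x : in_sl x -> (U *m rho x <= U)%MS.
  move=> slx; apply/row_subP => a; rewrite row_mul memU T_rho //.
  by apply: submx_trans (submxMr _ _) (S_inv x slx); rewrite -memU row_sub.
case: (irr U U_inv) => [/andP [U0 _]|U1]; last by rewrite -[T]mul1mx -memU.
by case/negP: nz_v; rewrite -submx0 (submx_trans _ U0) // memU.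
Qed.

Section Span.
Variables (K : fieldType) (D : nat).
Implicit Types (P : 'rV[K]_D -> Prop) (s : seq 'rV[K]_D).

Definition seqmx s : 'M[K]_(size s, D) := \matrix_(i < size s) s`_i.

Lemma submx_mul0 m1 m2 p q (M : 'M[K]_(m1, p)) (N : 'M[K]_(m2, p)) (Z : 'M[K]_(p, q)) :
  (M <= N)%MS -> N *m Z = 0 -> M *m Z = 0.
Proof. by case/submxP => c -> NZ; rewrite -mulmxA NZ mulmx0. Qed.

Lemma mem_seqmx u s : u \in s -> (u <= seqmx s)%MS.
Proof.
rewrite -index_mem => us.
by have := row_sub (Ordinal us) (seqmx s); rewrite rowK /= nth_index // -index_mem.
Qed.

Lemma seqmx_mul_sub m s (B : 'M[K]_D) (N : 'M[K]_(m, D)) :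
  (forall u, u \in s -> (u *m B <= N)%MS) -> (seqmx s *m B <= N)%MS.
Proof.
by move=> sN; apply/row_subP => i; rewrite row_mul rowK; apply/sN/mem_nth.
Qed.

Lemma seqmx_sub m s (N : 'M[K]_(m, D)) :
  (forall u, u \in s -> (u <= N)%MS) -> (seqmx s <= N)%MS.
Proof.
by move=> sN; rewrite -[seqmx s]mulmx1; apply: seqmx_mul_sub => u /sN; rewrite mulmx1.
Qed.

(* A spanning family of maximal rank spans everything spanned by P. *)
Lemma span_exists P : exists M : 'M[K]_D, forall v, (v <= M)%MS <-> in_span P v.
Proof.
pose ranked k := `[< exists s, (forall u, u \in s -> P u) /\ \rank (seqmx s) = k >].
have ranked0 : ranked 0%N.
  apply/asboolP; exists [::]; split => //; apply/eqP; rewrite mxrank_eq0.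
  by apply/eqP/matrixP => -[].
have ranked_le k : ranked k -> (k <= D)%N by move=> /asboolP [s [_ <-]]; apply: rank_leq_col.
case: (ex_maxnP (ex_intro _ 0%N ranked0) ranked_le) => k /asboolP [s0 [Ps0 rk_s0]] max_k.
exists <<seqmx s0>>%MS => v; rewrite genmxE; split; first by exists s0.
case=> s [Ps vs].
have Ps0s u : u \in s0 ++ s -> P u by rewrite mem_cat => /orP [/Ps0|/Ps].
have s0_sub : (seqmx s0 <= seqmx (s0 ++ s))%MS.
  by apply: seqmx_sub => u us; apply: mem_seqmx; rewrite mem_cat us.
have s_sub : (seqmx s <= seqmx (s0 ++ s))%MS.
  by apply: seqmx_sub => u us; apply: mem_seqmx; rewrite mem_cat us orbT.
have rk_le : (\rank (seqmx (s0 ++ s)) <= k)%N by apply/max_k/asboolP; exists (s0 ++ s).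
have sub_s0 : (seqmx (s0 ++ s) <= seqmx s0)%MS.
  have := mxrank_leqif_sup s0_sub; rewrite rk_s0 => /leqifP.
  by case: ifP => // _ /(leq_ltn_trans rk_le); rewrite ltnn.
exact: submx_trans vs (submx_trans s_sub sub_s0).
Qed.

Lemma span_ofP P v : (v <= span_of P)%MS <-> in_span P v.
Proof.
move: v; exact: (epsilon_spec (inhabits 0)
  (fun M : 'M[K]_D => forall v, (v <= M)%MS <-> in_span P v) (span_exists P)).
Qed.

Lemma sub_span_of P u : P u -> (u <= span_of P)%MS.
Proof.
move=> Pu; apply/span_ofP; exists [:: u]; split; first by move=> x /[!inE] /eqP ->.
by apply: mem_seqmx; rewrite inE.
Qed.

Lemma span_of_mul_sub m P (B : 'M[K]_D) (N : 'M[K]_(m, D)) :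
  (forall u, P u -> (u *m B <= N)%MS) -> (span_of P *m B <= N)%MS.
Proof.
move=> PN; apply/row_subP => i; rewrite row_mul.
have /span_ofP [s [Ps row_s]] := row_sub i (span_of P).
apply: submx_trans (submxMr B row_s) _.
by apply: seqmx_mul_sub => u /Ps; apply: PN.
Qed.

Lemma span_of_sub m P (N : 'M[K]_(m, D)) :
  (forall u, P u -> (u <= N)%MS) -> (span_of P <= N)%MS.
Proof.
by move=> PN; rewrite -[span_of P]mulmx1; apply: span_of_mul_sub => u /PN; rewrite mulmx1.
Qed.

End Span.

Section TensorProduct.
Variables (K : numFieldType) (n : nat) (l1 l2 : domwt n) (c1 c2 : K) (neq_c12 : c1 != c2)
  (d1 : nat) (rho1 : 'M[K]_n -> 'M[K]_d1) (v1 : 'rV[K]_d1) (H1 : is_simple_hw l1 rho1 v1)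
  (d2 : nat) (rho2 : 'M[K]_n -> 'M[K]_d2) (v2 : 'rV[K]_d2) (H2 : is_simple_hw l2 rho2 v2).

Local Notation D := (d1 * d2)%N.
Local Notation A := (tens_act rho1 rho2 c1 c2).
Local Notation w := (v1 *t v2 : 'rV[K]_D).

Definition P1 x : 'M[K]_D := rho1 x *t 1%:M.
Definition P2 x : 'M[K]_D := 1%:M *t rho2 x.

Lemma rho1_mod : is_sl_mod (mx_act rho1). Proof. by case: H1. Qed.
Lemma rho2_mod : is_sl_mod (mx_act rho2). Proof. by case: H2. Qed.

Lemma tens_actE x p : A x p = p.[c1] *: P1 x + p.[c2] *: P2 x.
Proof. by []. Qed.

Lemma tens_act1 x : A x 1 = P1 x + P2 x.
Proof. by rewrite tens_actE !hornerC !scale1r. Qed.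

Lemma tens_actX x : A x 'X = c1 *: P1 x + c2 *: P2 x.
Proof. by rewrite tens_actE !hornerX. Qed.

Lemma P12C x y : P1 x *m P2 y = P2 y *m P1 x.
Proof. by rewrite /P1 /P2 !tensmx_mul !mulmx1 !mul1mx. Qed.

Lemma P1_lie x y : in_sl x -> in_sl y -> P1 (lie x y) = P1 y *m P1 x - P1 x *m P1 y.
Proof.
move=> slx sly.
by rewrite /P1 (sl_mod_lie rho1_mod) // !tensmx_mul mulmx1 tensmxDl tensmxNl.
Qed.

Lemma P2_lie x y : in_sl x -> in_sl y -> P2 (lie x y) = P2 y *m P2 x - P2 x *m P2 y.
Proof.
move=> slx sly.
by rewrite /P2 (sl_mod_lie rho2_mod) // !tensmx_mul mulmx1 tensmxDr tensmxNr.
Qed.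

Lemma tens_act_linear c x y p : in_sl x -> in_sl y ->
  A (c *: x + y) p = c *: A x p + A y p.
Proof.
move=> slx sly; rewrite !tens_actE /P1 /P2 (sl_mod_linear rho1_mod) //.
rewrite (sl_mod_linear rho2_mod) // tensmxDl tensmxZl tensmxDr tensmxZr.
by rewrite !scalerDr !scalerA [c * p.[c1]]mulrC [c * p.[c2]]mulrC addrACA.
Qed.

(* Since P1 and P2 commute, the four cross terms of the bracket cancel in pairs. *)
Lemma tens_act_lie x y p q : in_sl x -> in_sl y ->
  A (lie x y) (p * q) = A y q *m A x p - A x p *m A y q.
Proof.
move=> slx sly; rewrite !tens_actE P1_lie // P2_lie // !hornerM.
rewrite !mulmxDl !mulmxDr -!scalemxAl -!scalemxAr !scalerA.
rewrite -[P2 y *m P1 x]P12C -[P2 x *m P1 y]P12C !scalerBr.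
rewrite [q.[c1] * p.[c1]]mulrC [q.[c2] * p.[c2]]mulrC.
rewrite [q.[c1] * p.[c2]]mulrC [q.[c2] * p.[c1]]mulrC.
set a := _ *: (P1 y *m P1 x); set b := _ *: (P1 x *m P1 y).
set e := _ *: (P2 y *m P2 x); set f := _ *: (P2 x *m P2 y).
set g := _ *: (P1 y *m P2 x); set h := _ *: (P1 x *m P2 y).
clearbody a b e f g h.
rewrite (addrC h e) [a + g + _]addrACA (addrC b h) [h + b + _]addrACA (addrC h g).
by rewrite addrKA opprD addrACA.
Qed.

(* Evaluation at the two points c1, c2 only sees the linear interpolant of p. *)
Lemma tens_act_span x p : exists a b, A x p = a *: A x 1 + b *: A x 'X.
Proof.
have c12_neq0 : c1 - c2 != 0 by rewrite subr_eq0.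
pose b := (p.[c1] - p.[c2]) / (c1 - c2).
exists (p.[c1] - b * c1), b.
rewrite tens_actE tens_act1 tens_actX !scalerDr !scalerA addrACA -!scalerDl.
by congr (_ *: _ + _ *: _); rewrite /b; [rewrite subrK | field].
Qed.

Lemma P1_tens_act x : P1 x = (c1 - c2)^-1 *: (A x 'X - c2 *: A x 1).
Proof.
rewrite tens_act1 tens_actX [c2 *: (_ + _)]scalerDr opprD addrACA subrr addr0 -scalerBl scalerA.
by rewrite mulVf ?scale1r // subr_eq0.
Qed.

Lemma P2_tens_act x : P2 x = (c2 - c1)^-1 *: (A x 'X - c1 *: A x 1).
Proof.
rewrite tens_act1 tens_actX [c1 *: (_ + _)]scalerDr opprD addrACA subrr add0r -scalerBl scalerA.
by rewrite mulVf ?scale1r // subr_eq0 eq_sym.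
Qed.

Lemma w_nplus x p : in_nplus x -> w *m A x p = 0.
Proof.
case: H1 => _ _ _ v1N _; case: H2 => _ _ _ v2N _ xN.
rewrite tens_actE mulmxDr -!scalemxAr mul_tensmx1 mul_tens1mx v1N // v2N //.
by rewrite tens0mx tensmx0 !scaler0 addr0.
Qed.

Lemma w_cartan h p : in_cartan h ->
  w *m A h p = (p.[c1] * wt l1 h + p.[c2] * wt l2 h) *: w.
Proof.
case: H1 => _ _ _ _ v1H; case: H2 => _ _ _ _ v2H hH.
rewrite tens_actE mulmxDr -!scalemxAr mul_tensmx1 mul_tens1mx v1H // v2H //.
by rewrite tensmxZl tensmxZr !scalerA scalerDl.
Qed.

Lemma w_cartan1 h : in_cartan h -> w *m A h 1 = wt (wt_add l1 l2) h *: w.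
Proof. by move=> hH; rewrite w_cartan // !hornerC !mul1r wt_add_apply. Qed.

(** * The filtration *)

Local Notation W r := (filt A w r).
Local Notation B r := (filtm1 A w r).
Local Notation G r := (grpiece A w r).
Local Notation Pj r := (grproj A w r).

Lemma mono_filt k u : mono A w k u -> (u <= W k)%MS.
Proof. by move=> uk; apply: sub_span_of; exists k. Qed.

Lemma filtS r s : (r <= s)%N -> (W r <= W s)%MS.
Proof.
move=> le_rs; apply: span_of_sub => u [k le_kr uk]; apply: sub_span_of.
by exists k => //; apply: leq_trans le_kr le_rs.
Qed.

Lemma w_filt r : (w <= W r)%MS.
Proof. exact: submx_trans (mono_filt (mono0 _ _)) (filtS (leq0n r)). Qed.

Lemma filt_mulXn r j x : in_sl x -> (W r *m A x 'X^j <= W (r + j))%MS.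
Proof.
move=> slx; apply: span_of_mul_sub => u [k le_kr uk].
exact: submx_trans (mono_filt (monoS _ slx uk)) (filtS (leq_add le_kr (leqnn j))).
Qed.

Lemma filt_mul1 r x : in_sl x -> (W r *m A x 1 <= W r)%MS.
Proof. by move=> slx; have := filt_mulXn r 0 slx; rewrite expr0 addn0. Qed.

Lemma filt_mulX r x : in_sl x -> (W r *m A x 'X <= W r.+1)%MS.
Proof. by move=> slx; have := filt_mulXn r 1 slx; rewrite expr1 addn1. Qed.

Lemma filt_mul r x p : in_sl x -> (W r *m A x p <= W r.+1)%MS.
Proof.
move=> slx; have [a [b ->]] := tens_act_span x p.
rewrite mulmxDr -!scalemxAr addmx_sub ?scalemx_sub ?filt_mulX //.
exact: submx_trans (filt_mul1 r slx) (filtS (leqnSn r)).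
Qed.

Lemma filt_mulXB r x a : in_sl x -> (W r *m (A x 'X - a *: A x 1) <= W r.+1)%MS.
Proof.
move=> slx; rewrite mulmxBr addmx_sub ?eqmx_opp ?filt_mulX // -scalemxAr scalemx_sub //.
exact: submx_trans (filt_mul1 r slx) (filtS (leqnSn r)).
Qed.

Lemma filt_P1 r x : in_sl x -> (W r *m P1 x <= W r.+1)%MS.
Proof. by move=> slx; rewrite P1_tens_act -scalemxAr scalemx_sub ?filt_mulXB. Qed.

Lemma filt_P2 r x : in_sl x -> (W r *m P2 x <= W r.+1)%MS.
Proof. by move=> slx; rewrite P2_tens_act -scalemxAr scalemx_sub ?filt_mulXB. Qed.

Lemma filtm1_sub r : (B r <= W r)%MS.
Proof. by case: r => [|r]; rewrite ?sub0mx //= filtS. Qed.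

Lemma filt_sub_filtm1 k r : (k < r)%N -> (W k <= B r)%MS.
Proof. by case: r => [//|r] lt_kr; apply: filtS. Qed.

Lemma filtm1_mulXn r k x : in_sl x -> (B r *m A x 'X^k <= B (r + k))%MS.
Proof. by case: r => [|r] slx; [rewrite mul0mx sub0mx | apply: filt_mulXn]. Qed.

Lemma grpiece_sub r : (G r <= W r)%MS.
Proof. exact: diffmxSl. Qed.

Lemma grpiece_cap r : (G r :&: B r)%MS = 0.
Proof. exact: capmx_diff. Qed.

Lemma grpiece_add r : (G r + B r :=: W r)%MS.
Proof.
move/capmx_idPr: (filtm1_sub r) => capWB.
apply: eqmx_trans _ (addsmx_diff_cap_eq (W r) (B r)).
exact: adds_eqmx (eqmx_refl _) (eqmx_sym capWB).
Qed.

Lemma grproj_sub r m (v : 'M_(m, D)) : (v *m Pj r <= G r)%MS.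
Proof. exact: proj_mx_sub. Qed.

Lemma grproj_id r m (v : 'M_(m, D)) : (v <= G r)%MS -> v *m Pj r = v.
Proof. exact: proj_mx_id (grpiece_cap r). Qed.

Lemma grproj_0 r m (v : 'M_(m, D)) : (v <= B r)%MS -> v *m Pj r = 0.
Proof. exact: proj_mx_0 (grpiece_cap r). Qed.

Lemma grproj_compl r m (v : 'M_(m, D)) : (v <= W r)%MS -> (v - v *m Pj r <= B r)%MS.
Proof. by move=> vW; apply: proj_mx_compl_sub; rewrite grpiece_add. Qed.

Lemma w_grpiece0 : (w <= G 0)%MS.
Proof.
have := grpiece_add 0; move/eqmxP => /andP [_ WG].
by apply: submx_trans (w_filt 0) (submx_trans WG _); rewrite addsmx0.
Qed.

(* The action on gr is well defined: projecting onto G r before acting changes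
   the result only by an element of B (r + k). *)
Lemma grproj_mulXn r k s x (u : 'rV[K]_D) : (r + k)%N = s -> in_sl x -> (u <= W r)%MS ->
  u *m Pj r *m A x 'X^k *m Pj s = u *m A x 'X^k *m Pj s.
Proof.
move=> <- slx uW; apply/eqP; rewrite -subr_eq0 -!mulmxBl; apply/eqP; apply: grproj_0.
rewrite -opprB mulNmx eqmx_opp.
exact: submx_trans (submxMr _ (grproj_compl uW)) (filtm1_mulXn r k slx).
Qed.

(** * The associated graded module *)

Definition GW : lmodType K := nat -> 'rV[K]_D.

Lemma GW_ext (f g : GW) : (forall s, f s = g s) -> f = g.
Proof. exact: funext. Qed.

(* gr_act is the action on families with g r in G r; gr_mod first projects every
   component onto G r, which makes the whole of GW a current-algebra module. *)
Definition gr_norm (g : GW) : GW := fun r => g r *m Pj r.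
Definition gr_mod x p (g : GW) : GW := gr_act A w x p (gr_norm g).
Definition gr_Xn x a (g : GW) s : 'rV[K]_D :=
  if (a <= s)%N then g (s - a)%N *m A x 'X^a *m Pj s else 0.

Lemma gr_actE x p (g : GW) s :
  gr_act A w x p g s = (\sum_(k < s.+1) p`_k *: (g (s - k)%N *m A x 'X^k)) *m Pj s.
Proof. by rewrite /gr_act mulmx_suml; apply: eq_bigr => k _; rewrite -scalemxAl. Qed.

Lemma gr_act_grpiece x p (g : GW) s : (gr_act A w x p g s <= G s)%MS.
Proof. by rewrite gr_actE; apply: grproj_sub. Qed.

Lemma gr_act_Xn x a (g : GW) s : gr_act A w x 'X^a g s = gr_Xn x a g s.
Proof.
rewrite /gr_act /gr_Xn; case: (leqP a s) => [le_as|lt_sa].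
  rewrite (bigD1 (Ordinal (le_as : (a < s.+1)%N))) //= coefXn eqxx scale1r big1 ?addr0 //.
  move=> k neq_ka; rewrite coefXn; case: eqP => [eq_ka|]; last by rewrite scale0r.
  by move: neq_ka; rewrite -(inj_eq val_inj) /= eq_ka eqxx.
apply: big1 => k _; rewrite coefXn; case: eqP => [eq_ka|]; last by rewrite scale0r.
by move: (ltn_ord k); rewrite eq_ka ltnS leqNgt lt_sa.
Qed.

Lemma gr_act1 x (g : GW) s : gr_act A w x 1 g s = g s *m A x 1 *m Pj s.
Proof. by have := gr_act_Xn x 0 g s; rewrite expr0 /gr_Xn leq0n subn0. Qed.

Lemma gr_act_linear_p x c p q (g : GW) s :
  gr_act A w x (c *: p + q) g s = c *: gr_act A w x p g s + gr_act A w x q g s.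
Proof.
rewrite !gr_actE scalemxAl -mulmxDl scaler_sumr -big_split /=; congr (_ *m _).
by apply: eq_bigr => k _; rewrite coefD coefZ scalerDl scalerA.
Qed.

Lemma gr_act_linear_x c x y p (g : GW) s : in_sl x -> in_sl y ->
  gr_act A w (c *: x + y) p g s = c *: gr_act A w x p g s + gr_act A w y p g s.
Proof.
move=> slx sly; rewrite !gr_actE scalemxAl -mulmxDl scaler_sumr -big_split /=.
congr (_ *m _); apply: eq_bigr => k _.
by rewrite tens_act_linear // mulmxDr -scalemxAr !scalerDr !scalerA mulrC.
Qed.

Lemma gr_act_linear_g c x p (g g' : GW) s :
  gr_act A w x p (c *: g + g') s = c *: gr_act A w x p g s + gr_act A w x p g' s.
Proof.
rewrite !gr_actE scalemxAl -mulmxDl scaler_sumr -big_split /=.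
congr (_ *m _); apply: eq_bigr => k _.
by rewrite mulmxDl -scalemxAl !scalerDr !scalerA mulrC.
Qed.

Lemma gr_act0 x (g : GW) s : gr_act A w x 0 g s = 0.
Proof. by rewrite gr_actE big1 ?mul0mx // => k _; rewrite coef0 scale0r. Qed.

Lemma gr_actZ x c p (g : GW) s : gr_act A w x (c *: p) g s = c *: gr_act A w x p g s.
Proof. by have := gr_act_linear_p x c p 0 g s; rewrite addr0 gr_act0 addr0. Qed.

Lemma gr_act_sum x I (r : seq I) (F : I -> {poly K}) (g : GW) s :
  gr_act A w x (\sum_(i <- r) F i) g s = \sum_(i <- r) gr_act A w x (F i) g s.
Proof.
elim: r => [|i r IH]; first by rewrite !big_nil gr_act0.
rewrite !big_cons -IH.
by have := gr_act_linear_p x 1 (F i) (\sum_(j <- r) F j) g s; rewrite !scale1r.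
Qed.

Lemma gr_Xn_sum x a I (r : seq I) (c : I -> K) (F : I -> GW) s :
  gr_Xn x a (fun t => \sum_(i <- r) c i *: F i t) s = \sum_(i <- r) c i *: gr_Xn x a (F i) s.
Proof.
rewrite /gr_Xn; case: ifP => _; last by rewrite big1 // => i _; rewrite scaler0.
by rewrite !mulmx_suml; apply: eq_bigr => i _; rewrite -!scalemxAl.
Qed.

Lemma gr_act_poly x p (g : GW) s :
  gr_act A w x p g s = \sum_(a < size p) p`_a *: gr_Xn x a g s.
Proof.
rewrite -{1}(coefK p) poly_def gr_act_sum; apply: eq_bigr => a _.
by rewrite gr_actZ gr_act_Xn.
Qed.

Lemma gr_norm_id (g : GW) : (forall s, (g s <= G s)%MS) -> gr_norm g = g.
Proof. by move=> gG; apply: GW_ext => s; rewrite /gr_norm grproj_id. Qed.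

Lemma gr_norm_grpiece (g : GW) s : (gr_norm g s <= G s)%MS.
Proof. exact: grproj_sub. Qed.

Lemma gr_norm_act x p (g : GW) : gr_norm (gr_act A w x p g) = gr_act A w x p g.
Proof. by apply: gr_norm_id => s; apply: gr_act_grpiece. Qed.

Lemma gr_Xn_comp x y a b (h : GW) s : in_sl x -> in_sl y -> (forall r, (h r <= G r)%MS) ->
  gr_Xn x a (gr_Xn y b h) s =
  if (a + b <= s)%N then h (s - (a + b))%N *m A y 'X^b *m A x 'X^a *m Pj s else 0.
Proof.
move=> slx sly hG; rewrite /gr_Xn.
case: (leqP a s) => [le_as|lt_sa]; last first.
  by case: ifP => // le_abs; move: (leq_trans (leq_addr b a) le_abs); rewrite leqNgt lt_sa.
rewrite -(leq_subRL _ le_as); case: ifP => le_b; last by rewrite !mul0mx.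
rewrite subnDA; apply: grproj_mulXn => //; first by rewrite subnK.
apply: submx_trans (submxMr _ (submx_trans (hG _) (grpiece_sub _))) _.
by have := filt_mulXn (s - a - b) b sly; rewrite subnK.
Qed.

Lemma gr_Xn_lie x y a b (h : GW) s : in_sl x -> in_sl y -> (forall r, (h r <= G r)%MS) ->
  gr_Xn (lie x y) (a + b) h s = gr_Xn x a (gr_Xn y b h) s - gr_Xn y b (gr_Xn x a h) s.
Proof.
move=> slx sly hG; rewrite !gr_Xn_comp // [(b + a)%N]addnC /gr_Xn.
case: ifP => _; last by rewrite subrr.
by rewrite exprD tens_act_lie // mulmxBr mulmxBl !mulmxA.
Qed.

Lemma polyM_def (p q : {poly K}) :
  p * q = \sum_(a < size p) \sum_(b < size q) (p`_a * q`_b) *: 'X^(a + b).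
Proof.
rewrite -{1}(coefK p) -{1}(coefK q) !poly_def mulr_suml; apply: eq_bigr => a _.
rewrite mulr_sumr; apply: eq_bigr => b _.
by rewrite -scalerAl -scalerAr scalerA exprD.
Qed.

Lemma gr_mod_lie x y p q (g : GW) : in_sl x -> in_sl y ->
  gr_mod (lie x y) (p * q) g = gr_mod x p (gr_mod y q g) - gr_mod y q (gr_mod x p g).
Proof.
move=> slx sly; apply: GW_ext => s; rewrite /gr_mod !gr_norm_act.
set h := gr_norm g; have hG r : (h r <= G r)%MS by apply: gr_norm_grpiece.
change (gr_act A w (lie x y) (p * q) h s =
  gr_act A w x p (gr_act A w y q h) s - gr_act A w y q (gr_act A w x p h) s).
have -> : gr_act A w y q h = fun r => \sum_(b < size q) q`_b *: gr_Xn y b h r.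
  by apply: GW_ext => r; rewrite gr_act_poly.
have -> : gr_act A w x p h = fun r => \sum_(a < size p) p`_a *: gr_Xn x a h r.
  by apply: GW_ext => r; rewrite gr_act_poly.
rewrite (gr_act_poly x p) (gr_act_poly y q) polyM_def gr_act_sum.
transitivity (\sum_(a < size p) \sum_(b < size q)
  (p`_a * q`_b) *: (gr_Xn x a (gr_Xn y b h) s - gr_Xn y b (gr_Xn x a h) s)).
  apply: eq_bigr => a _; rewrite gr_act_sum; apply: eq_bigr => b _.
  by rewrite gr_actZ gr_act_Xn gr_Xn_lie.
under [X in _ = X - _]eq_bigr => a _ do rewrite (gr_Xn_sum x a (index_enum _)) scaler_sumr.
under [X in _ = _ - X]eq_bigr => b _ do rewrite (gr_Xn_sum y b (index_enum _)) scaler_sumr.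
rewrite [X in _ = _ - X]exchange_big /= -sumrB; apply: eq_bigr => a _.
rewrite -sumrB; apply: eq_bigr => b _.
by rewrite !scalerA scalerBr [q`_b * _]mulrC.
Qed.

Lemma gr_mod_cur : is_cur_mod gr_mod.
Proof.
split.
- move=> x y p c g sl_x sl_y; apply: GW_ext => s.
  by rewrite /gr_mod gr_act_linear_x.
- move=> x p q c g sl_x; apply: GW_ext => s.
  by rewrite /gr_mod gr_act_linear_p.
- move=> x p c g g' sl_x; apply: GW_ext => s; rewrite /gr_mod.
  have -> : gr_norm (c *: g + g') = c *: gr_norm g + gr_norm g'.
    apply: GW_ext => r.
    change ((c *: g r + g' r) *m Pj r = c *: (g r *m Pj r) + g' r *m Pj r).
    by rewrite mulmxDl scalemxAl.
  exact: gr_act_linear_g.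
- exact: gr_mod_lie.
Qed.

Definition gr_one : GW := fun r => if r == 0%N then w else 0.

Lemma gr_one_grpiece r : (gr_one r <= G r)%MS.
Proof. by rewrite /gr_one; case: eqP => [->|_]; [exact: w_grpiece0 | exact: sub0mx]. Qed.

Lemma gr_act_one x p s : gr_act A w x p gr_one s = p`_s *: (w *m A x 'X^s *m Pj s).
Proof.
rewrite gr_actE big_ord_recr /= big1 ?add0r ?subnn ?scalemxAl // => k _.
by rewrite /gr_one subn_eq0 leqNgt ltn_ord /= mul0mx scaler0.
Qed.

Lemma gr_mod_one x p : gr_mod x p gr_one = gr_act A w x p gr_one.
Proof. by rewrite /gr_mod gr_norm_id //; apply: gr_one_grpiece. Qed.

Lemma w_pow1_filt0 f k : in_sl f -> (w *m A f 1 ^+ k <= W 0)%MS.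
Proof.
move=> slf; elim: k => [|k IH]; first by rewrite expr0 mulmx1 w_filt.
by rewrite mxexpSr mulmxA; apply: submx_trans (submxMr _ IH) (filt_mul1 0 slf).
Qed.

Lemma w_powX_filt f k : in_sl f -> (w *m A f 'X ^+ k <= W k)%MS.
Proof.
move=> slf; elim: k => [|k IH]; first by rewrite expr0 mulmx1 w_filt.
by rewrite mxexpSr mulmxA; apply: submx_trans (submxMr _ IH) (filt_mulX k slf).
Qed.

Lemma iter_gr_mod1 f k : in_sl f ->
  iter k (gr_mod f 1) gr_one = fun s => if s == 0%N then w *m A f 1 ^+ k else 0.
Proof.
have w_pow1_grpiece0 j : in_sl f -> (w *m A f 1 ^+ j <= G 0)%MS.
  move=> slf; have := grpiece_add 0; move/eqmxP => /andP [_ WG].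
  by apply: submx_trans (w_pow1_filt0 j slf) (submx_trans WG _); rewrite addsmx0.
move=> slf; elim: k => [|k IH]; first by apply: GW_ext => s; rewrite expr0 mulmx1.
rewrite iterS IH /gr_mod gr_norm_id; last first.
  by move=> s; case: eqP => [->|_]; [exact: w_pow1_grpiece0 | exact: sub0mx].
apply: GW_ext => s; rewrite gr_act1; case: eqP => [->|_]; last by rewrite !mul0mx.
by rewrite -(mulmxA w) -mxexpSr grproj_id // w_pow1_grpiece0.
Qed.

Lemma iter_gr_modX f k : in_sl f ->
  iter k (gr_mod f 'X) gr_one = fun s => if s == k then w *m A f 'X ^+ k *m Pj k else 0.
Proof.
move=> slf; elim: k => [|k IH].
  apply: GW_ext => s; rewrite /= /gr_one expr0 mulmx1; case: eqP => // _.
  by rewrite grproj_id // w_grpiece0.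
rewrite iterS IH /gr_mod gr_norm_id; last first.
  by move=> s; case: eqP => [->|_]; [apply: grproj_sub | apply: sub0mx].
apply: GW_ext => s; rewrite -[X in gr_act _ _ _ X]expr1 gr_act_Xn /gr_Xn.
case: s => [|s] //=; rewrite subn1 /= eqSS.
case: eqP => [->|_]; last by rewrite !mul0mx.
rewrite (@grproj_mulXn k 1 k.+1) ?addn1 ?w_powX_filt //.
by rewrite expr1 -(mulmxA w) -mxexpSr.
Qed.

Lemma w_pow_lead (M N : 'M[K]_D) (a b : K) :
  (forall r, (W r *m M <= W r.+1)%MS) -> (forall r, (W r *m N <= W r)%MS) ->
  forall k, (w *m (a *: M + b *: N) ^+ k - a ^+ k *: (w *m M ^+ k) <= B k)%MS.
Proof.
move=> M_raise N_keep; set X := a *: M + b *: N.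
have X_filtm1 k : (B k *m X <= B k.+1)%MS.
  case: k => [|k]; first by rewrite mul0mx sub0mx.
  rewrite mulmxDr -!scalemxAr addmx_sub ?scalemx_sub //=.
  exact: submx_trans (N_keep _) (filtS (leqnSn _)).
have wM_filt k : (w *m M ^+ k <= W k)%MS.
  elim: k => [|k IH]; first by rewrite expr0 mulmx1 w_filt.
  by rewrite mxexpSr mulmxA; apply: submx_trans (submxMr _ IH) (M_raise _).
elim=> [|k IH]; first by rewrite !expr0 mulmx1 scale1r subrr sub0mx.
have -> : w *m X ^+ k.+1 - a ^+ k.+1 *: (w *m M ^+ k.+1) =
    (w *m X ^+ k - a ^+ k *: (w *m M ^+ k)) *m X + (b * a ^+ k) *: (w *m M ^+ k *m N).
  rewrite mulmxBl !mxexpSr !mulmxA -scalemxAl /X mulmxDr -!scalemxAr.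
  rewrite [X in a ^+ k *: X]mulmxDr -!scalemxAr scalerDr !scalerA -exprSr [a ^+ k * b]mulrC.
  by rewrite opprD addrA subrK.
rewrite addmx_sub ?scalemx_sub //; first exact: submx_trans (submxMr _ IH) (X_filtm1 k).
exact: submx_trans (submxMr _ (wM_filt k)) (N_keep k).
Qed.

Lemma f_root_sl (i j : 'I_n) : (i < j)%N -> in_sl (f_root K i j).
Proof. by move=> lt_ij; apply: in_sl_delta; rewrite neq_ltn lt_ij orbT. Qed.

Lemma gr_one_f1_vanish (i j : 'I_n) : (i < j)%N ->
  iter (wt_coroot (wt_add l1 l2) i j).+1 (gr_mod (f_root K i j) 1) gr_one = 0.
Proof.
move=> lt_ij; rewrite iter_gr_mod1; last exact: f_root_sl.
apply: GW_ext => s.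
case: eqP => // _; apply: (hw_f_root_vanish (rho := fun x => A x 1)).
- by move=> c x y slx sly; apply: tens_act_linear.
- by move=> x y slx sly; rewrite -[in LHS](mulr1 1) tens_act_lie.
- by rewrite neq_ltn lt_ij.
- exact/w_nplus/e_root_nplus.
- by rewrite w_cartan1 ?wt_h_root //; apply: h_root_cartan.
Qed.

Lemma gr_one_fX_vanish (i j : 'I_n) : (i < j)%N ->
  iter (minn (wt_coroot l1 i j) (wt_coroot l2 i j)).+1 (gr_mod (f_root K i j) 'X) gr_one = 0.
Proof.
move=> lt_ij; have slf := f_root_sl lt_ij; set f := f_root K i j.
rewrite iter_gr_modX //; apply: GW_ext => s; case: eqP => // _; apply: grproj_0.
case: (leqP (wt_coroot l1 i j) (wt_coroot l2 i j)) => _.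
  have := w_pow_lead (c1 - c2) c2 (fun r => filt_P1 r slf) (fun r => filt_mul1 r slf)
    (wt_coroot l1 i j).+1.
  have -> : A f 'X = (c1 - c2) *: P1 f + c2 *: A f 1.
    by rewrite tens_actX tens_act1 scalerDr addrA -scalerDl subrK.
  rewrite /P1 tensmx1_exp mul_tensmx1 simple_hw_f_root_vanish //.
  by rewrite tens0mx scaler0 subr0.
have := w_pow_lead (c2 - c1) c1 (fun r => filt_P2 r slf) (fun r => filt_mul1 r slf)
  (wt_coroot l2 i j).+1.
have -> : A f 'X = (c2 - c1) *: P2 f + c1 *: A f 1.
  by rewrite tens_actX tens_act1 scalerDr addrCA -scalerDl subrK addrC.
rewrite /P2 tens1mx_exp mul_tens1mx simple_hw_f_root_vanish //.
by rewrite tensmx0 scaler0 subr0.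
Qed.

Lemma gr_one_F_rel : F_rel l1 l2 gr_mod gr_one.
Proof.
split.
- move=> x p xN; rewrite gr_mod_one; apply: GW_ext => s.
  by rewrite gr_act_one w_nplus // !mul0mx scaler0.
- move=> h p hH p0; rewrite gr_mod_one; apply: GW_ext => s; rewrite gr_act_one; case: s => [|s].
    by rewrite -horner_coef0 p0 scale0r.
  by rewrite w_cartan // -scalemxAl grproj_0 ?scaler0 //; exact: w_filt.
- move=> x p xN p0 p1; rewrite gr_mod_one; apply: GW_ext => s.
  rewrite gr_act_one; case: s => [|[|s]].
  + by rewrite p0 scale0r.
  + by rewrite p1 scale0r.
  rewrite grproj_0 ?scaler0 //=.
  apply: submx_trans (submxMr _ (w_filt 0)) (submx_trans (filt_mul 0 _ (in_sl_nminus xN)) _).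
  exact: filtS.
- move=> h hH; rewrite gr_mod_one; apply: GW_ext => s.
  rewrite gr_act_one coef1; case: s => [|s] /=.
    by rewrite expr0 scale1r w_cartan1 // -scalemxAl grproj_id // w_grpiece0.
  rewrite scale0r; change (0 = wt (wt_add l1 l2) h *: gr_one s.+1).
  by rewrite /gr_one /= scaler0.
- by split; [exact: gr_one_f1_vanish | exact: gr_one_fX_vanish].
Qed.

(** * Generation of gr by the class of w *)

Lemma mono_filt_stable r : (W r.+1 <= W r)%MS -> forall k u, mono A w k u -> (u <= W r)%MS.
Proof.
move=> stable k u; elim => [|k' j x v slx _ IH]; first exact: w_filt.
have [a [b ->]] := tens_act_span x 'X^j.
rewrite mulmxDr -!scalemxAr addmx_sub ?scalemx_sub //.
  exact: submx_trans (submxMr _ IH) (filt_mul1 r slx).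
exact: submx_trans (submx_trans (submxMr _ IH) (filt_mulX r slx)) stable.
Qed.

Lemma filt_stable r : (W r.+1 <= W r)%MS -> forall s, (W s <= W r)%MS.
Proof. by move=> stable s; apply: span_of_sub => u [k _ uk]; apply: mono_filt_stable uk. Qed.

Lemma filt_stabilizes : exists r, (W r.+1 <= W r)%MS.
Proof.
apply: contrapT => not_stable.
have rk_lt r : (\rank (W r) < \rank (W r.+1))%N.
  have := mxrank_leqif_sup (filtS (leqnSn r)); move/leqifP; case: ifP => // WSW _.
  by case: not_stable; exists r.
have rk_ge r : (r <= \rank (W r))%N by elim: r => [//|r IH]; apply: leq_ltn_trans IH (rk_lt r).
by have := leq_trans (rk_ge D.+1) (rank_leq_col _); rewrite ltnn.
Qed.

Lemma grpiece_stable r s : (W r.+1 <= W r)%MS -> (r < s)%N -> (G s :=: (0 : 'M[K]_D))%MS.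
Proof.
move=> stable lt_rs; apply/eqmxP; rewrite sub0mx andbT -(grpiece_cap s) sub_capmx submx_refl.
apply: submx_trans (grpiece_sub s) (submx_trans (filt_stable stable s) _).
exact: filt_sub_filtm1.
Qed.

Definition gr_delta k (v : 'rV[K]_D) : GW := fun s => if s == k then v else 0.

Lemma GW_sumE I (r : seq I) (F : I -> GW) s : (\sum_(i <- r) F i) s = \sum_(i <- r) F i s.
Proof. by elim: r => [|i r IH]; rewrite ?big_nil ?big_cons //= -IH. Qed.

Lemma GW_scaleE c (f : GW) s : (c *: f) s = c *: f s.
Proof. by []. Qed.

Section GrGenerated.
Variable S : GW -> Prop.
Hypotheses (S_one : S gr_one) (S_linear : forall c g g', S g -> S g' -> S (c *: g + g'))
  (S_act : forall x p g, in_sl x -> S g -> S (gr_act A w x p g)).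

Lemma S0 : S 0.
Proof. by have := S_linear (-1) S_one S_one; rewrite scaleN1r addNr. Qed.

Lemma S_sum I (r : seq I) (c : I -> K) (F : I -> GW) :
  (forall i, S (F i)) -> S (\sum_(i <- r) c i *: F i).
Proof.
move=> SF; elim: r => [|i r IH]; first by rewrite big_nil; apply: S0.
by rewrite big_cons; apply: S_linear.
Qed.

Lemma S_mono k u : mono A w k u -> S (gr_delta k (u *m Pj k)).
Proof.
elim => [|k' j x v slx vk IH].
  have -> : gr_delta 0 (w *m Pj 0) = gr_one; last exact: S_one.
  apply: GW_ext => s; rewrite /gr_delta /gr_one.
  by case: eqP => // _; rewrite grproj_id ?w_grpiece0.
have -> : gr_delta (k' + j) (v *m A x 'X^j *m Pj (k' + j)) =
    gr_act A w x 'X^j (gr_delta k' (v *m Pj k')).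
  apply: GW_ext => s; rewrite gr_act_Xn /gr_Xn /gr_delta.
  case: (leqP j s) => [le_js|lt_sj]; last first.
    by case: eqP => // eq_s; move: lt_sj; rewrite eq_s ltnNge leq_addl.
  have -> : ((s - j)%N == k') = (s == k' + j) by rewrite -(eqn_add2r j) subnK.
  case: eqP => [->|_]; last by rewrite !mul0mx.
  by rewrite grproj_mulXn // mono_filt.
exact: S_act.
Qed.

Lemma S_delta r v : (v <= G r)%MS -> S (gr_delta r v).
Proof.
move=> vG; have /span_ofP [s [Ps vs]] := submx_trans vG (grpiece_sub r).
case/submxP: vs => a def_v.
have -> : gr_delta r v = \sum_(i < size s) a 0 i *: gr_delta r (s`_i *m Pj r).
  apply: GW_ext => t; rewrite GW_sumE; under eq_bigr => i _ do rewrite GW_scaleE.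
  rewrite /gr_delta; case: eqP => _; last by rewrite big1 // => i _; rewrite scaler0.
  rewrite -(grproj_id vG) def_v -mulmxA mulmx_sum_row; apply: eq_bigr => i _.
  by rewrite row_mul rowK.
apply: S_sum => i; have [k le_kr sk] := Ps (s`_i) (mem_nth 0 (ltn_ord i)).
case: (ltnP k r) => [lt_kr|le_rk].
  have -> : gr_delta r (s`_i *m Pj r) = 0; last exact: S0.
  apply: GW_ext => t; rewrite /gr_delta; case: eqP => // _; rewrite grproj_0 //.
  exact: submx_trans (mono_filt sk) (filt_sub_filtm1 lt_kr).
have eq_kr : k = r by apply/eqP; rewrite eqn_leq le_kr le_rk.
by rewrite -eq_kr; apply: S_mono.
Qed.

Lemma S_gr g : in_gr A w g -> S g.
Proof.
move=> gG; have [r stable] := filt_stabilizes.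
have -> : g = \sum_(t < r.+1) 1 *: gr_delta t (g t).
  apply: GW_ext => s; rewrite GW_sumE; case: (leqP s r) => [le_sr|lt_rs].
    rewrite (bigD1 (Ordinal (le_sr : (s < r.+1)%N))) //= big1 ?addr0.
      by rewrite scale1r /gr_delta eqxx.
    move=> t neq_ts; rewrite scale1r /gr_delta; case: eqP => // eq_st.
    by move: neq_ts; rewrite -(inj_eq val_inj) /= eq_st eqxx.
  rewrite big1; last first.
    move=> t _; rewrite scale1r /gr_delta; case: eqP => // eq_st.
    by move: (ltn_ord t); rewrite -eq_st ltnS leqNgt lt_rs.
  by apply/eqP; rewrite -submx0 (submx_trans (gG s)) // (grpiece_stable stable lt_rs).
by apply: S_sum => t; apply: S_delta.
Qed.

End GrGenerated.

(* The universal property only yields a map into GW; composing with gr_norm lands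
   in gr proper. *)
Lemma F_onto_gr (VF : lmodType K) (aF : 'M[K]_n -> {poly K} -> VF -> VF) (one : VF) :
  is_F l1 l2 aF one ->
  exists phi : VF -> nat -> 'rV[K]_D,
    [/\ forall u, in_gr A w (phi u),
        forall c u u' r, phi (c *: u + u') r = c *: phi u r + phi u' r,
        forall x p u r, in_sl x -> phi (aF x p u) r = gr_act A w x p (phi u) r &
        forall g, in_gr A w g -> exists u, forall r, phi u r = g r].
Proof.
case=> _ _ _ univF.
have [phi0 [phi0_lin phi0_one phi0_act]] := univF GW gr_mod gr_one gr_mod_cur gr_one_F_rel.
pose phi u := gr_norm (phi0 u).
have phi_lin c u u' : phi (c *: u + u') = c *: phi u + phi u'.
  apply: GW_ext => r; rewrite /phi phi0_lin.
  change ((c *: phi0 u r + phi0 u' r) *m Pj r = c *: (phi0 u r *m Pj r) + phi0 u' r *m Pj r).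
  by rewrite mulmxDl scalemxAl.
have phi_act x p u : in_sl x -> phi (aF x p u) = gr_act A w x p (phi u).
  by move=> slx; rewrite /phi phi0_act // /gr_mod gr_norm_act.
exists phi; split=> [u r|c u u' r|x p u r slx|g gG]; first exact: gr_norm_grpiece.
- by rewrite phi_lin.
- by rewrite phi_act.
have [] := S_gr (S := fun g => exists u, phi u = g) _ _ _ gG.
- by exists one; rewrite /phi phi0_one gr_norm_id // => r; apply: gr_one_grpiece.
- by move=> c g1 g2 [u1 <-] [u2 <-]; exists (c *: u1 + u2); rewrite phi_lin.
- by move=> x p g1 slx [u1 <-]; exists (aF x p u1); rewrite phi_act.
by move=> u <-; exists u.
Qed.

(* Both factors are simple and x (x) 1, x (x) t separate them (P1_tens_act), so
   a filtration step closed under the action must be everything. *)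
Lemma filt_full r : (W r.+1 <= W r)%MS -> (1%:M <= W r)%MS.
Proof.
move=> stable.
have P1_inv x : in_sl x -> (W r *m P1 x <= W r)%MS.
  by move=> slx; apply: submx_trans (filt_P1 r slx) (filt_stable stable _).
have P2_inv x : in_sl x -> (W r *m P2 x <= W r)%MS.
  by move=> slx; apply: submx_trans (filt_P2 r slx) (filt_stable stable _).
have first_full : (tens_rmx d1 v2 <= W r)%MS.
  apply: (simple_hw_preimage_full H1 _ P1_inv); last by rewrite mul_tens_rmx w_filt.
  by move=> x u _; rewrite !mul_tens_rmx mul_tensmx1.
have second_full u1 : (tens_lmx d2 u1 <= W r)%MS.
  apply: (simple_hw_preimage_full H2 _ P2_inv).
    by move=> x u _; rewrite !mul_tens_lmx mul_tens1mx.
  by rewrite mul_tens_lmx -mul_tens_rmx (submx_trans (submxMl _ _) first_full).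
apply/row_subP => j; rewrite row1; case: (mxtens_indexP j) => a b.
by rewrite delta_mx_tens -mul_tens_lmx (submx_trans (submxMl _ _) (second_full _)).
Qed.

(** * Multiplicities *)

Section Multiplicity.
Variables (dt : nat) (rhot : 'M[K]_n -> 'M[K]_dt) (k : nat) (X : 'I_k -> 'M[K]_(D, dt)).
Hypothesis X_intertw : forall i x, in_sl x -> A x 1 *m X i = X i *m rhot x.
Variable r0 : nat.
Hypothesis stable_r0 : (W r0.+1 <= W r0)%MS.

Local Notation E := (D * dt)%N.

(* Matrices D x dt are encoded as row vectors of length E via mxvec. *)
Definition hom_mx : 'M[K]_(k, E) := \matrix_(i < k) mxvec (X i).
Definition ann s : 'M[K]_E := kermx (lin_mx (mulmx (B s) : 'M[K]_(D, dt) -> 'M[K]_(D, dt))).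
Definition hom_ann s : 'M[K]_E := (hom_mx :&: ann s)%MS.
Definition hom_layer s : 'M[K]_E := (hom_ann s :\: hom_ann s.+1)%MS.

Lemma annP s (z : 'rV[K]_E) : (z <= ann s)%MS = (B s *m vec_mx z == 0).
Proof. by rewrite sub_kermx -{1}(vec_mxK z) mul_vec_lin mxvec_eq0. Qed.

Lemma hom_annS s : (hom_ann s.+1 <= hom_ann s)%MS.
Proof.
apply: capmxS => //; apply/row_subP => i; rewrite annP.
have := row_sub i (ann s.+1); rewrite annP => /eqP BZ.
by apply/eqP; apply: submx_mul0 BZ; apply: filtm1_sub.
Qed.

Lemma hom_layer_add s : (hom_layer s + hom_ann s.+1 :=: hom_ann s)%MS.
Proof.
move/capmx_idPr: (hom_annS s) => cap_ann.
apply: eqmx_trans _ (addsmx_diff_cap_eq (hom_ann s) (hom_ann s.+1)).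
exact: adds_eqmx (eqmx_refl _) (eqmx_sym cap_ann).
Qed.

Lemma hom_layer_cap s : (hom_layer s :&: hom_ann s.+1)%MS = 0.
Proof. exact: capmx_diff. Qed.

(* tail_proj s projects hom_mx onto hom_ann s, peeling off the layers 0 .. s-1. *)
Fixpoint tail_proj s : 'M[K]_E :=
  if s is s'.+1 then tail_proj s' *m proj_mx (hom_ann s'.+1) (hom_layer s') else 1%:M.
Definition layer_proj s : 'M[K]_E := tail_proj s *m proj_mx (hom_layer s) (hom_ann s.+1).

Lemma tail_proj_sub (y : 'rV[K]_E) s : (y <= hom_mx)%MS -> (y *m tail_proj s <= hom_ann s)%MS.
Proof.
case: s => [|s] hy /=; last by rewrite mulmxA proj_mx_sub.
by rewrite mulmx1 sub_capmx hy annP mul0mx eqxx.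
Qed.

Lemma telescope (y : 'rV[K]_E) N : (y <= hom_mx)%MS ->
  y = \sum_(s < N) y *m layer_proj s + y *m tail_proj N.
Proof.
move=> hy; elim: N => [|N IH]; first by rewrite big_ord0 add0r /= mulmx1.
rewrite big_ord_recr /= -addrA {1}IH; congr (_ + _).
rewrite /layer_proj (mulmxA y (tail_proj N)) (mulmxA y (tail_proj N) (proj_mx _ _)).
by rewrite add_proj_mx ?hom_layer_cap // hom_layer_add tail_proj_sub.
Qed.

Lemma tail_proj_end (y : 'rV[K]_E) : (y <= hom_mx)%MS -> y *m tail_proj r0.+1 = 0.
Proof.
move=> hy; have := tail_proj_sub r0.+1 hy; rewrite sub_capmx => /andP [_].
rewrite annP => /eqP WZ; apply: vec_mx_eq0.
by rewrite -[vec_mx _]mul1mx; apply: submx_mul0 WZ; apply: filt_full.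
Qed.

Lemma layer_proj_sub (y : 'rV[K]_E) s : (y *m layer_proj s <= hom_layer s)%MS.
Proof. by rewrite /layer_proj mulmxA proj_mx_sub. Qed.

Lemma layer_proj_hom (y : 'rV[K]_E) s : (y *m layer_proj s <= hom_mx)%MS.
Proof.
by have := submx_trans (layer_proj_sub y s) (diffmxSl _ _); rewrite sub_capmx => /andP [].
Qed.

Lemma layer_proj_ann (y : 'rV[K]_E) s : (y *m layer_proj s <= ann s)%MS.
Proof.
by have := submx_trans (layer_proj_sub y s) (diffmxSl _ _); rewrite sub_capmx => /andP [].
Qed.

Lemma hom_mx_intertw (z : 'rV[K]_E) x : (z <= hom_mx)%MS -> in_sl x ->
  A x 1 *m vec_mx z = vec_mx z *m rhot x.
Proof.
case/submxP => a -> slx.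
have -> : vec_mx (a *m hom_mx) = \sum_(i < k) a 0 i *: X i.
  rewrite mulmx_sum_row linear_sum; apply: eq_bigr => i _.
  by rewrite linearZ /= rowK mxvecK.
rewrite mulmx_sumr mulmx_suml; apply: eq_bigr => i _.
by rewrite -scalemxAr -scalemxAl X_intertw.
Qed.

(* The intertwiner out of gr attached to y: on gr_s it is the layer of y of
   order s, which kills W_(s-1) and hence is defined on gr_s = W_s / W_(s-1). *)
Definition layer (y : 'rV[K]_E) s : 'M[K]_(D, dt) := vec_mx (y *m layer_proj s).
Definition gr_hom (y : 'rV[K]_E) (g : nat -> 'rV[K]_D) : 'rV[K]_dt :=
  \sum_(s < r0.+1) g s *m layer y s.

Lemma filtm1_layer y s : B s *m layer y s = 0.
Proof. by apply/eqP; rewrite -annP layer_proj_ann. Qed.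

Lemma gr_hom_intertw y (g : nat -> 'rV[K]_D) x : in_sl x -> (forall r, (g r <= G r)%MS) ->
  gr_hom y (gr_act A w x 1 g) = gr_hom y g *m rhot x.
Proof.
move=> slx gG; rewrite /gr_hom mulmx_suml; apply: eq_bigr => s _; rewrite gr_act1.
have gA_filt : (g s *m A x 1 <= W s)%MS.
  exact: submx_trans (submxMr _ (submx_trans (gG s) (grpiece_sub s))) (filt_mul1 s slx).
have -> : g s *m A x 1 *m Pj s *m layer y s = g s *m A x 1 *m layer y s.
  apply/eqP; rewrite -subr_eq0 -mulmxBl -opprB mulNmx oppr_eq0; apply/eqP.
  exact: submx_mul0 (grproj_compl gA_filt) (filtm1_layer y s).
by rewrite -!mulmxA hom_mx_intertw ?layer_proj_hom.
Qed.

Lemma gr_hom_sum (c : 'I_k -> K) (Y : 'I_k -> 'rV[K]_E) g :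
  gr_hom (\sum_(i < k) c i *: Y i) g = \sum_(i < k) c i *: gr_hom (Y i) g.
Proof.
rewrite /gr_hom /layer.
under eq_bigr => s _ do rewrite mulmx_suml linear_sum mulmx_sumr.
rewrite exchange_big /=; apply: eq_bigr => i _; rewrite scaler_sumr.
by apply: eq_bigr => s _; rewrite -scalemxAl linearZ -scalemxAr.
Qed.

Lemma gr_hom_delta y s v : (s < r0.+1)%N -> gr_hom y (gr_delta s v) = v *m layer y s.
Proof.
move=> lt_sr; rewrite /gr_hom (bigD1 (Ordinal lt_sr)) //= big1 ?addr0 /gr_delta ?eqxx //.
move=> t neq_ts; case: eqP => [eq_t|_]; last by rewrite mul0mx.
by move: neq_ts; rewrite -(inj_eq val_inj) /= eq_t eqxx.
Qed.

(* If gr_hom y vanishes, each layer of y kills gr_s and W_(s-1), hence W_s,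
   so it lies in hom_ann s.+1 as well as in the complement hom_layer s. *)
Lemma gr_hom_inj y : (y <= hom_mx)%MS -> (forall g, in_gr A w g -> gr_hom y g = 0) -> y = 0.
Proof.
move=> hy gr_hom0.
have layer0 s : (s < r0.+1)%N -> y *m layer_proj s = 0.
  move=> lt_sr.
  have G_layer : G s *m layer y s = 0.
    apply/row_matrixP => a; rewrite row_mul row0 -gr_hom_delta // gr_hom0 // => t.
    by rewrite /gr_delta; case: eqP => [->|_]; [exact: row_sub | exact: sub0mx].
  have W_layer : W s *m layer y s = 0.
    have : (W s <= G s + B s)%MS by rewrite grpiece_add.
    case/sub_addsmxP => u ->; rewrite mulmxDl -!mulmxA G_layer filtm1_layer.
    by rewrite !mulmx0 addr0.
  apply/eqP; rewrite -submx0 -(hom_layer_cap s) sub_capmx layer_proj_sub /=.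
  by rewrite sub_capmx layer_proj_hom annP /= W_layer.
by rewrite (telescope r0.+1 hy) tail_proj_end // addr0 big1 // => s _; apply: layer0.
Qed.

End Multiplicity.

Lemma F_hom_multiplicity (VF : lmodType K) (aF : 'M[K]_n -> {poly K} -> VF -> VF)
    (phi : VF -> nat -> 'rV[K]_D) (dt : nat) (rhot : 'M[K]_n -> 'M[K]_dt) (k : nat)
    (X : 'I_k -> 'M[K]_(D, dt)) :
  (forall u, in_gr A w (phi u)) ->
  (forall c u u' r, phi (c *: u + u') r = c *: phi u r + phi u' r) ->
  (forall x p u r, in_sl x -> phi (aF x p u) r = gr_act A w x p (phi u) r) ->
  (forall g, in_gr A w g -> exists u, forall r, phi u r = g r) ->
  (forall i x, in_sl x -> A x 1 *m X i = X i *m rhot x) ->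
  (forall cf : 'I_k -> K, \sum_(i < k) cf i *: X i = 0 -> forall i, cf i = 0) ->
  exists phis : 'I_k -> VF -> 'rV[K]_dt,
    [/\ forall i c u u', phis i (c *: u + u') = c *: phis i u + phis i u',
        forall i x u, in_sl x -> phis i (aF x 1 u) = phis i u *m rhot x &
        forall cf : 'I_k -> K,
          (forall u, \sum_(i < k) cf i *: phis i u = 0) -> forall i, cf i = 0].
Proof.
move=> phi_gr phi_lin phi_act phi_onto X_intertw X_free.
have [r0 stable] := filt_stabilizes.
have gr_hom_ext y (g g' : nat -> 'rV[K]_D) : (forall r, g r = g' r) ->
    gr_hom X r0 y g = gr_hom X r0 y g'.
  by move=> eq_g; rewrite /gr_hom; apply: eq_bigr => s _; rewrite eq_g.
exists (fun i u => gr_hom X r0 (mxvec (X i)) (phi u)); split.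
- move=> i c u u'; rewrite (gr_hom_ext _ _ _ (phi_lin c u u')) /gr_hom.
  by rewrite scaler_sumr -big_split /=; apply: eq_bigr => s _; rewrite mulmxDl -scalemxAl.
- move=> i x u slx; rewrite (gr_hom_ext _ _ _ (phi_act x 1 u^~ slx)).
  by rewrite (gr_hom_intertw X_intertw) //; apply: phi_gr.
move=> cf sum_phis0.
set y := \sum_(i < k) cf i *: mxvec (X i).
have y_hom : (y <= hom_mx X)%MS.
  by apply: summx_sub => i _; apply: scalemx_sub; have := row_sub i (hom_mx X); rewrite rowK.
have y0 : y = 0.
  apply: (gr_hom_inj stable y_hom) => g /phi_onto [u phi_u].
  by rewrite -(gr_hom_ext _ _ _ phi_u) gr_hom_sum.
apply: X_free; apply/eqP; rewrite -mxvec_eq0 -y0 linear_sum /=.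
by under eq_bigr => i _ do rewrite linearZ.
Qed.

End TensorProduct.

Theorem lemma5p2 (R : realType) (n : nat) (l1 l2 : domwt n) (c1 c2 : R[i])
  (hc : c1 != c2)
  (d1 : nat) (rho1 : 'M[R[i]]_n -> 'M[R[i]]_d1) (v1 : 'rV[R[i]]_d1)
  (H1 : is_simple_hw l1 rho1 v1)
  (d2 : nat) (rho2 : 'M[R[i]]_n -> 'M[R[i]]_d2) (v2 : 'rV[R[i]]_d2)
  (H2 : is_simple_hw l2 rho2 v2)
  (VF : lmodType R[i]) (aF : 'M[R[i]]_n -> {poly R[i]} -> VF -> VF) (one : VF)
  (HF : is_F l1 l2 aF one) :
  let A := tens_act rho1 rho2 c1 c2 in
  let w : 'rV[R[i]]_(d1 * d2) := v1 *t v2 in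
  (exists phi : VF -> nat -> 'rV[R[i]]_(d1 * d2),
    [/\ forall u, in_gr A w (phi u),
        forall c u u' r, phi (c *: u + u') r = c *: phi u r + phi u' r,
        forall x p u r, in_sl x -> phi (aF x p u) r = gr_act A w x p (phi u) r &
        forall g, in_gr A w g -> exists u, forall r, phi u r = g r])
  /\
  (forall (lt : domwt n) (dt : nat) (rhot : 'M[R[i]]_n -> 'M[R[i]]_dt)
          (vt : 'rV[R[i]]_dt),
     is_simple_hw lt rhot vt ->
     forall (k : nat) (X : 'I_k -> 'M[R[i]]_(d1 * d2, dt)),
       (forall i x, in_sl x -> A x 1 *m X i = X i *m rhot x) ->
       (forall cf : 'I_k -> R[i], \sum_(i < k) cf i *: X i = 0 -> forall i, cf i = 0) ->
       exists phis : 'I_k -> VF -> 'rV[R[i]]_dt,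
         [/\ forall i c u u', phis i (c *: u + u') = c *: phis i u + phis i u',
             forall i x u, in_sl x -> phis i (aF x 1 u) = phis i u *m rhot x &
             forall cf : 'I_k -> R[i],
               (forall u, \sum_(i < k) cf i *: phis i u = 0) -> forall i, cf i = 0]).
Proof.
move=> A w.
have [phi [phi_gr phi_lin phi_act phi_onto]] := F_onto_gr hc H1 H2 HF.
split; first by exists phi.
move=> _ dt rhot _ _ k X.
exact: (F_hom_multiplicity hc H1 H2 phi_gr phi_lin phi_act phi_onto).
Qed.
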